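(* Let $n \ge 1$. Consider $2n$ water tanks: $n$ ''red'' tanks each initially containing $1$ unit of water, and $n$ ''blue'' tanks each initially containing $0$ units. There is a strategy (a finite sequence of pairwise equilibrations) after which every red tank contains strictly less than $\frac{2}{\sqrt{n}}$ units of water and every blue tank contains strictly more than $1 - \frac{2}{\sqrt{n}}$ units of water.
   Context: A configuration of water tanks is an assignment of a real number (the amount of water, or water level) $x_a$ to each tank $a$. Equilibrating two tanks $a \neq b$ replaces both $x_a$ and $x_b$ by $\frac{x_a + x_b}{2}$ and leaves all other tanks unchanged. A strategy is a finite sequence of (unordered) pairs of distinct tanks, executed as the corresponding sequence of equilibrations. *)

From mathcomp Require Import all_boot all_order all_algebra.
From mathcomp Require Import reals.
Set Implicit Arguments. Unset Strict Implicit. Unset Printing Implicit Defensive.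
Import Order.TTheory GRing.Theory Num.Theory.
Local Open Scope ring_scope.

Definition config (R : realType) (T : Type) := T -> R.

Definition equilibrate (R : realType) (T : eqType) (a b : T) (x : config R T)
  : config R T :=
  fun c => if (c == a) || (c == b) then (x a + x b) / 2 else x c.

Definition is_strategy (T : eqType) (s : seq (T * T)) : Prop :=
  all (fun p => p.1 != p.2) s.

Definition run (R : realType) (T : eqType) (s : seq (T * T)) (x : config R T)
  : config R T :=
  foldl (fun y p => equilibrate p.1 p.2 y) x s.

(* Red tanks are inl i, blue tanks are inr i, i : 'I_n. *)
Definition red_blue_init (R : realType) (n : nat) : config R ('I_n + 'I_n) :=
  fun c => match c with inl _ => 1 | inr _ => 0 end.

(* Let every blue tank in turn meet all red tanks, in a fixed order.  The
   water [red_total m j] left in the first m red tanks after j blue tanks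
   satisfies red_total (m+1) (j+1) = (red_total m (j+1) + red_total (m+1) j) / 2,
   and by concavity of the square root it stays below
   ((m - j) + sqrt ((m - j)^2 + m + j)) / 2.  After all n blue tanks the red
   tanks thus hold at most sqrt (2 n) / 2, and by conservation the blue tanks
   lack at most as much.  These totals are then spread out: for
   2^k <= n < 2^(k+1), hypercube averaging of the first 2^k and then of the last
   2^k tanks of a colour leaves each of them with at most total / 2^k, and
   sqrt (2 n) / 2 / 2^k < 2 / sqrt n. *)

From mathcomp Require Import all_boot all_order all_algebra.
From mathcomp Require Import reals.
From mathcomp Require Import ring lra zify.
Import Order.TTheory GRing.Theory Num.Theory.
Local Open Scope ring_scope.
Set Implicit Arguments. Unset Strict Implicit. Unset Printing Implicit Defensive.

Section Run.
Variables (R : realType) (T : eqType).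
Implicit Types (x y : config R T) (s : seq (T * T)) (l : seq T).

Lemma equilibrate_fst a b x : equilibrate a b x a = (x a + x b) / 2.
Proof. by rewrite /equilibrate eqxx. Qed.

Lemma equilibrate_snd a b x : equilibrate a b x b = (x a + x b) / 2.
Proof. by rewrite /equilibrate eqxx orbT. Qed.

Lemma equilibrate_other a b x c : c != a -> c != b -> equilibrate a b x c = x c.
Proof. by move=> /negbTE ca /negbTE cb; rewrite /equilibrate ca cb. Qed.

Lemma run_cons p s x : run (p :: s) x = run s (equilibrate p.1 p.2 x).
Proof. by []. Qed.

Lemma run_cat s1 s2 x : run (s1 ++ s2) x = run s2 (run s1 x).
Proof. by rewrite /run foldl_cat. Qed.

Lemma eq_run s x y : x =1 y -> run s x =1 run s y.
Proof.
elim: s x y => [//|[a b] s IH] x y exy; rewrite !run_cons; apply: IH => c.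
by rewrite /equilibrate !exy.
Qed.

Lemma run_compl s x c : run s (fun d => 1 - x d) c = 1 - run s x c.
Proof.
elim: s x c => [//|[a b] s IH] x c; rewrite !run_cons -IH; apply: eq_run => d.
by rewrite /equilibrate; case: ifP => // _; field.
Qed.

Lemma strategy_cat s1 s2 :
  is_strategy s1 -> is_strategy s2 -> is_strategy (s1 ++ s2).
Proof. by rewrite /is_strategy all_cat => -> ->. Qed.

Lemma zip_strategy l1 l2 : uniq (l1 ++ l2) -> is_strategy (zip l1 l2).
Proof.
elim: l1 l2 => [|a l1 IH] [|b l2] //=.
rewrite mem_cat in_cons !negb_or => /andP [/and3P [_ ab _] u].
rewrite /is_strategy /= ab; apply: IH.
by move: u; rewrite -cat1s uniq_catCA => /andP [].
Qed.

Lemma run_zip_const l1 l2 x (A B : R) :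
  uniq (l1 ++ l2) -> size l1 = size l2 ->
  {in l1, forall c, x c = A} -> {in l2, forall c, x c = B} ->
  forall c, run (zip l1 l2) x c = if c \in l1 ++ l2 then (A + B) / 2 else x c.
Proof.
elim: l1 l2 x => [|a l1 IH] [|b l2] // x.
rewrite cat_cons cons_uniq mem_cat in_cons !negb_or.
move=> /andP [/and3P [al1 ab al2] u] [sz] xA xB c.
have [bl1 bl2 u'] : [/\ b \notin l1, b \notin l2 & uniq (l1 ++ l2)].
  by move: u; rewrite -cat1s uniq_catCA /= mem_cat negb_or => /andP [/andP [-> ->] ->].
have xa : x a = A by apply: xA; rewrite mem_head.
have xb : x b = B by apply: xB; rewrite mem_head.
have notab d : d \in l1 ++ l2 -> d != a /\ d != b.
  by move=> dl; split; apply/eqP => e; [move: al1 al2 | move: bl1 bl2];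
    rewrite -e; move: dl; rewrite mem_cat => /orP [] ->.
rewrite run_cons (IH _ _ u' sz); first last.
- move=> d dl2; have [da db] := notab d ltac:(by rewrite mem_cat dl2 orbT).
  by rewrite equilibrate_other // xB // inE dl2 orbT.
- move=> d dl1; have [da db] := notab d ltac:(by rewrite mem_cat dl1).
  by rewrite equilibrate_other // xA // inE dl1 orbT.
rewrite in_cons !mem_cat in_cons.
have [cl|] := boolP ((c \in l1) || (c \in l2)).
  by case/orP: cl => ->; rewrite !orbT.
rewrite negb_or => /andP [/negbTE -> /negbTE ->]; rewrite orbF /=.
have [->|ca] := eqVneq c a; first by rewrite equilibrate_fst xa xb.
have [->|cb] := eqVneq c b; first by rewrite equilibrate_snd xa xb.
by rewrite equilibrate_other.
Qed.

Fixpoint average k l : seq (T * T) :=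
  if k is k'.+1 then
    average k' (take (2 ^ k') l) ++ average k' (drop (2 ^ k') l)
      ++ zip (take (2 ^ k') l) (drop (2 ^ k') l)
  else [::].

Lemma average_strategy k l : uniq l -> is_strategy (average k l).
Proof.
elim: k l => [//|k IH] l ul; rewrite /is_strategy /= !all_cat.
rewrite IH ?take_uniq ?IH ?drop_uniq //=.
by apply: zip_strategy; rewrite cat_take_drop.
Qed.

Lemma run_average k l x c : uniq l -> size l = (2 ^ k)%N ->
  run (average k l) x c = if c \in l then (\sum_(d <- l) x d) / (2 ^ k)%:R else x c.
Proof.
elim: k l x c => [|k IH] l x c ul.
  by case: l ul => [|a [|]] //= _ _; rewrite big_seq1 divr1 inE; case: eqP => [->|].
move=> sz; set N := (2 ^ k)%N; set l1 := take N l; set l2 := drop N l.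
have {}sz : size l = (N + N)%N by rewrite sz expnS mul2n addnn.
have sz1 : size l1 = N by rewrite size_takel // sz leq_addr.
have sz2 : size l2 = N by rewrite size_drop sz addnK.
have ul12 : uniq (l1 ++ l2) by rewrite cat_take_drop.
move: (ul12); rewrite cat_uniq => /and3P [u1 /hasPn dis21 u2].
have dis12 : {in l1, forall d, d \notin l2}.
  by move=> d dl1; apply/negP => /dis21; rewrite dl1.
set y := run (average k l1) x; set z := run (average k l2) y.
have hy d : y d = if d \in l1 then (\sum_(e <- l1) x e) / N%:R else x d by apply: IH.
have hz d : z d = if d \in l2 then (\sum_(e <- l2) x e) / N%:R else y d.
  rewrite /z IH //; congr (if _ then _ / _ else _); apply: eq_big_seq => e el2.
  by rewrite hy (negbTE (dis21 e el2)).
rewrite /= !run_cat -/y -/z (run_zip_const (A := (\sum_(e <- l1) x e) / N%:R)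
  (B := (\sum_(e <- l2) x e) / N%:R) ul12 (etrans sz1 (esym sz2))); first last.
- by move=> d dl2; rewrite hz dl2.
- by move=> d dl1; rewrite hz (negbTE (dis12 d dl1)) hy dl1.
rewrite -(cat_take_drop N l) -/l1 -/l2 mem_cat big_cat /=.
have [cl|cl] := boolP ((c \in l1) || (c \in l2)).
  have N0 : N%:R != 0 :> R by rewrite pnatr_eq0 -lt0n expn_gt0.
  by rewrite expnS mulnC natrM; field.
move: cl; rewrite negb_or => /andP [/negbTE cl1 /negbTE cl2].
by rewrite hz cl2 hy cl1.
Qed.

Definition cover_average k l :=
  average k (take (2 ^ k) l) ++ average k (drop (size l - 2 ^ k) l).

Lemma cover_average_strategy k l : uniq l -> is_strategy (cover_average k l).
Proof.
by move=> ul; rewrite /is_strategy all_cat !average_strategy ?take_uniq ?drop_uniq.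
Qed.

Lemma size_take_pow k l : (2 ^ k <= size l)%N -> size (take (2 ^ k) l) = (2 ^ k)%N.
Proof. exact: size_takel. Qed.

Lemma size_drop_pow k l : (2 ^ k <= size l)%N ->
  size (drop (size l - 2 ^ k) l) = (2 ^ k)%N.
Proof. by move=> le; rewrite size_drop subKn. Qed.

Lemma run_cover_average_out k l x c : uniq l -> (2 ^ k <= size l)%N ->
  c \notin l -> run (cover_average k l) x c = x c.
Proof.
move=> ul le cl; rewrite run_cat.
rewrite run_average ?drop_uniq ?size_drop_pow // (negbTE (contraNN (@mem_drop _ _ _ _) cl)).
rewrite run_average ?take_uniq ?size_take_pow // (negbTE (contraNN (@mem_take _ _ _ _) cl)).
by [].
Qed.

Lemma sum_run_average k l x : uniq l -> size l = (2 ^ k)%N ->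
  \sum_(d <- l) run (average k l) x d = \sum_(d <- l) x d.
Proof.
move=> ul sz; rewrite (eq_big_seq (fun=> (\sum_(d <- l) x d) / (2 ^ k)%:R)).
  rewrite big_const_seq count_predT iter_addr_0 sz -[RHS](@divfK _ (2 ^ k)%:R) ?mulr_natr //.
  by rewrite pnatr_eq0 expn_eq0.
by move=> d dl; rewrite run_average ?dl.
Qed.

Lemma run_cover_average_le k l x c : uniq l -> (2 ^ k <= size l <= 2 ^ k.+1)%N ->
  {in l, forall d, 0 <= x d} -> c \in l ->
  run (cover_average k l) x c <= (\sum_(d <- l) x d) / (2 ^ k)%:R.
Proof.
move=> ul /andP [le1 le2] x_ge0 cl.
set N := (2 ^ k)%N; set l1 := take N l; set l2 := drop (size l - N) l.
have N_gt0 : (0 : R) < N%:R by rewrite ltr0n expn_gt0.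
have sum_ge0 l' (f : config R T) : {in l', forall d, 0 <= f d} -> 0 <= \sum_(d <- l') f d.
  by move=> f_ge0; rewrite big_seq sumr_ge0.
set y := run (average k l1) x.
have hy d : y d = if d \in l1 then (\sum_(e <- l1) x e) / N%:R else x d.
  by rewrite /y run_average ?take_uniq ?size_take_pow.
have y_ge0 : {in l, forall d, 0 <= y d}.
  move=> d dl; rewrite hy; case: ifP => _; last exact: x_ge0.
  by apply: divr_ge0 (ltW N_gt0); apply: sum_ge0 => e /mem_take /x_ge0.
have sum_y : \sum_(d <- l) y d = \sum_(d <- l) x d.
  move: ul; rewrite -(cat_take_drop N l) !big_cat cat_uniq => /and3P [ul1 /hasPn dis _].
  rewrite sum_run_average ?size_take_pow //; congr (_ + _).
  by apply: eq_big_seq => d /dis /negbTE dl1; rewrite hy dl1.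
rewrite run_cat run_average ?drop_uniq ?size_drop_pow // -/l2 -/y.
have [cl2|cl2] := boolP (c \in l2).
  apply: ler_wpM2r; first by rewrite invr_ge0 ltW.
  rewrite -sum_y.
  rewrite -[in X in _ <= X](cat_take_drop (size l - N) l) big_cat lerDr.
  by apply: sum_ge0 => d /mem_take /y_ge0.
have cl1 : c \in l1.
  move: cl; rewrite -(cat_take_drop (size l - N) l) mem_cat (negbTE cl2) orbF.
  have le : (size l - N <= N)%N by move: le2; rewrite expnS mul2n -addnn -/N; lia.
  by rewrite -(take_takel _ le) => /mem_take.
rewrite hy cl1; apply: ler_wpM2r; first by rewrite invr_ge0 ltW.
rewrite -[in X in _ <= X](cat_take_drop N l) big_cat lerDl.
by apply: sum_ge0 => d /mem_drop /x_ge0.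
Qed.

End Run.

Section Levels.
Variable R : realType.

(* [level i j] is the level of red tank i-1 after it has met blue tanks
   0, ..., j-1, which is also the level of blue tank j-1 after it has met red
   tanks 0, ..., i-1; [level 0 j = 0] and [level i 0 = 1] are untouched tanks. *)
Fixpoint level (i : nat) : nat -> R :=
  if i is i'.+1 then
    fix level_i (j : nat) : R :=
      if j is j'.+1 then (level i' j'.+1 + level_i j') / 2 else 1
  else fun=> 0.

Lemma level0 j : level 0 j = 0. Proof. by []. Qed.
Lemma levelS0 i : level i.+1 0 = 1. Proof. by []. Qed.
Lemma levelSS i j : level i.+1 j.+1 = (level i j.+1 + level i.+1 j) / 2.
Proof. by []. Qed.

Lemma level_in01 i j : 0 <= level i j <= 1.
Proof.
elim: i j => [|i IHi] j; first by rewrite level0 lexx ler01.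
elim: j => [|j IHj]; first by rewrite levelS0 ler01 lexx.
rewrite levelSS; have /andP [h1 h2] := IHi j.+1; move/andP: IHj => [h3 h4].
apply/andP; split; lra.
Qed.

Definition red_total (m j : nat) : R := \sum_(a < m) level a.+1 j.

Lemma red_total0 j : red_total 0 j = 0. Proof. by rewrite /red_total big_ord0. Qed.

Lemma red_totalS m j : red_total m.+1 j = red_total m j + level m.+1 j.
Proof. by rewrite /red_total big_ord_recr. Qed.

Lemma red_total_init m : red_total m 0 = m%:R.
Proof.
elim: m => [|m IH]; first by rewrite red_total0.
by rewrite red_totalS IH levelS0 -natr1.
Qed.

Lemma red_total_step m j : red_total m j = red_total m j.+1 + level m j.+1.
Proof.
elim: m => [|m IH]; first by rewrite !red_total0 level0 addr0.
rewrite !red_totalS IH levelSS; lra.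
Qed.

Lemma red_totalSS m j :
  red_total m.+1 j.+1 = (red_total m j.+1 + red_total m.+1 j) / 2.
Proof. rewrite (red_total_step m.+1 j) red_totalS levelSS; lra. Qed.

Lemma red_blue_total m j : red_total m j + \sum_(b < j) level m b.+1 = m%:R.
Proof.
elim: j => [|j IH]; first by rewrite big_ord0 addr0 red_total_init.
by rewrite big_ord_recr /= addrCA -red_total_step addrC.
Qed.

Lemma sqrt_midpoint (a b : R) : 0 <= a -> 0 <= b ->
  Num.sqrt a + Num.sqrt b <= 2 * Num.sqrt ((a + b) / 2).
Proof.
move=> a_ge0 b_ge0; rewrite -ler_sqr ?nnegrE ?addr_ge0 ?mulr_ge0 ?sqrtr_ge0 //.
rewrite exprMn sqr_sqrtr ?divr_ge0 ?addr_ge0 //.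
have := sqr_ge0 (Num.sqrt a - Num.sqrt b).
by rewrite sqrrB sqrrD !sqr_sqrtr //; lra.
Qed.

Lemma sqrt_sqrD_ge (a b : R) : 0 <= a -> 0 <= b -> a <= Num.sqrt (a ^+ 2 + b).
Proof.
move=> a_ge0 b_ge0; rewrite -{1}(ger0_norm a_ge0) -sqrtr_sqr ler_sqrt.
  by rewrite lerDl.
by rewrite addr_ge0 ?sqr_ge0.
Qed.

(* The positive root F of F^2 - (m - j) F = (m + j) / 4. *)
Definition red_bound (m j : nat) : R :=
  ((m%:R - j%:R) + Num.sqrt ((m%:R - j%:R) ^+ 2 + (m%:R + j%:R))) / 2.

Lemma red_bound_supersolution m j :
  (red_bound m j.+1 + red_bound m.+1 j) / 2 <= red_bound m.+1 j.+1.
Proof.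
rewrite /red_bound -[m.+1%:R]natr1 -[j.+1%:R]natr1; set x : R := m%:R; set y : R := j%:R.
have x_ge0 : 0 <= x by apply: ler0n.
have y_ge0 : 0 <= y by apply: ler0n.
have sqrD_ge0 (u v : R) : 0 <= v -> 0 <= u ^+ 2 + v.
  by move=> v_ge0; rewrite addr_ge0 ?sqr_ge0.
have := sqrt_midpoint (sqrD_ge0 (x - (y + 1)) (x + (y + 1)) ltac:(lra))
  (sqrD_ge0 (x + 1 - y) (x + 1 + y) ltac:(lra)).
have -> : ((x - (y + 1)) ^+ 2 + (x + (y + 1)) + ((x + 1 - y) ^+ 2 + (x + 1 + y))) / 2
        = (x + 1 - (y + 1)) ^+ 2 + (x + 1 + (y + 1)) by field.
lra.
Qed.

Lemma red_total_le_bound m j : red_total m j <= red_bound m j.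
Proof.
elim: m j => [|m IHm] j.
  have := sqrt_sqrD_ge (ler0n R j) (ler0n R j).
  by rewrite red_total0 /red_bound sub0r sqrrN add0r; lra.
elim: j => [|j IHj].
  have := sqrt_sqrD_ge (ler0n R m.+1) (ler0n R m.+1).
  by rewrite red_total_init /red_bound subr0 addr0; lra.
rewrite red_totalSS; apply: le_trans (red_bound_supersolution m j).
by have := IHm j.+1; lra.
Qed.

Lemma red_total_diag_lt (n N : nat) : (0 < n)%N -> (n < N + N)%N ->
  red_total n n / N%:R < 2 / Num.sqrt n%:R.
Proof.
move=> n_gt0 lt_nN.
have N_gt0 : (0 : R) < N%:R by rewrite ltr0n; lia.
apply: (@le_lt_trans _ _ (red_bound n n / N%:R)).
  by rewrite ler_wpM2r ?invr_ge0 ?ler0n ?red_total_le_bound.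
rewrite /red_bound subrr expr0n !add0r.
set s := Num.sqrt (n%:R + n%:R); set q := Num.sqrt (n%:R : R).
have q_gt0 : 0 < q by rewrite sqrtr_gt0 ltr0n.
have sq_lt : s * q < 4 * N%:R.
  rewrite -ltr_sqr ?nnegrE ?mulr_ge0 ?sqrtr_ge0 ?ler0n //.
  rewrite exprMn !sqr_sqrtr ?addr_ge0 ?ler0n // -natrD -natrM.
  by rewrite -natrX -natrM ltr_nat; nia.
by rewrite ltr_pdivrMr // mulrAC ltr_pdivlMr // mulrAC; lra.
Qed.

End Levels.

Arguments level : simpl never.

Section SumEq.
Variables A B : eqType.
Implicit Types (a : A) (b : B).

Lemma inl_eq a a' : (inl a == inl a' :> A + B) = (a == a'). Proof. by []. Qed.
Lemma inr_eq b b' : (inr b == inr b' :> A + B) = (b == b'). Proof. by []. Qed.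
Lemma inl_eq_inr a b : (inl a == inr b :> A + B) = false. Proof. by []. Qed.
Lemma inr_eq_inl a b : (inr b == inl a :> A + B) = false. Proof. by []. Qed.

End SumEq.

Section Grid.
Variables (R : realType) (m : nat).

Definition red (i : nat) : 'I_m.+1 + 'I_m.+1 := inl (inord i).
Definition blue (j : nat) : 'I_m.+1 + 'I_m.+1 := inr (inord j).

Definition sweep (j i : nat) := [seq (red t, blue j) | t <- iota 0 i].
Definition grid (j : nat) := flatten [seq sweep t m.+1 | t <- iota 0 j].

(* The configuration once blue tanks 0, ..., j-1 have each met all red tanks in
   order and blue tank j has met red tanks 0, ..., i-1. *)
Definition grid_config (j i : nat) : config R ('I_m.+1 + 'I_m.+1) :=
  fun c => match c with
  | inl a => level R a.+1 (if (a < i)%N then j.+1 else j)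
  | inr b => if (b < j)%N then level R m.+1 b.+1
             else if b == j :> nat then level R i j.+1 else 0
  end.

Lemma inord_eq (a : 'I_m.+1) i : (i < m.+1)%N -> (a == inord i) = (val a == i).
Proof. by move=> lt_im; rewrite -(inj_eq val_inj) /= inordK. Qed.

Lemma sweepS j i : sweep j i.+1 = sweep j i ++ [:: (red i, blue j)].
Proof. by rewrite /sweep -[i.+1]addn1 iotaD map_cat. Qed.

Lemma gridS j : grid j.+1 = grid j ++ sweep j m.+1.
Proof. by rewrite /grid -[j.+1]addn1 iotaD map_cat flatten_cat /= cats0. Qed.

Lemma run_sweep j i : (j < m.+1)%N -> (i <= m.+1)%N ->
  run (sweep j i) (grid_config j 0) =1 grid_config j i.
Proof.
move=> lt_jm; elim: i => [//|i IH] le_im c.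
rewrite sweepS run_cat (eq_run _ (IH (ltnW le_im))) /= /equilibrate /red /blue.
case: c => [a|b].
  rewrite inl_eq inl_eq_inr orbF inord_eq //; case: (eqVneq (val a) i) => [ai|ai].
    by rewrite /grid_config /= !inordK ?ai ?eqxx ?ltnn ?ltnSn // levelSS addrC.
  by rewrite /grid_config /= [in RHS]ltnS [(a <= i)%N]leq_eqVlt (negbTE ai).
rewrite inr_eq_inl inr_eq inord_eq //=; case: (eqVneq (val b) j) => [bj|bj].
  by rewrite /grid_config /= !inordK // ?bj ?eqxx ?ltnn levelSS addrC.
by [].
Qed.

Lemma grid_config_next j : grid_config j m.+1 =1 grid_config j.+1 0.
Proof.
case=> [a|b] /=; first by rewrite ltn_ord.
case: (ltngtP (val b) j) => [bj|jb|->]; last by rewrite ltnSn.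
- by rewrite ltnS ltnW.
- by rewrite ltnNge jb level0; case: ifP.
Qed.

Lemma run_grid j : (j <= m.+1)%N -> run (grid j) (grid_config 0 0) =1 grid_config j 0.
Proof.
elim: j => [//|j IH] le_jm c.
rewrite gridS run_cat (eq_run _ (IH (ltnW le_jm))).
by rewrite run_sweep // grid_config_next.
Qed.

Lemma grid_config_init : grid_config 0 0 =1 @red_blue_init R m.+1.
Proof. by case=> [a|b] //=; case: (val b == 0)%N. Qed.

Lemma grid_strategy j : is_strategy (grid j).
Proof. by apply/allP => p /flattenP [l /mapP [t _ ->]] /mapP [u _ ->]. Qed.

Definition reds : seq ('I_m.+1 + 'I_m.+1) := [seq inl a | a <- enum 'I_m.+1].
Definition blues : seq ('I_m.+1 + 'I_m.+1) := [seq inr b | b <- enum 'I_m.+1].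

Lemma reds_uniq : uniq reds.
Proof. by rewrite map_inj_uniq ?enum_uniq // => a b []. Qed.

Lemma blues_uniq : uniq blues.
Proof. by rewrite map_inj_uniq ?enum_uniq // => a b []. Qed.

Lemma size_reds : size reds = m.+1.
Proof. by rewrite size_map size_enum_ord. Qed.

Lemma size_blues : size blues = m.+1.
Proof. by rewrite size_map size_enum_ord. Qed.

Lemma inl_in_reds a : inl a \in reds.
Proof. by rewrite map_f ?mem_enum. Qed.

Lemma inr_in_blues b : inr b \in blues.
Proof. by rewrite map_f ?mem_enum. Qed.

Lemma inr_notin_reds b : inr b \notin reds.
Proof. by apply/mapP => -[]. Qed.

Lemma inl_notin_blues a : inl a \notin blues.
Proof. by apply/mapP => -[]. Qed.

Lemma sum_reds_grid : \sum_(d <- reds) grid_config m.+1 0 d = red_total R m.+1 m.+1.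
Proof. by rewrite big_map big_enum. Qed.

Lemma sum_blues_grid_compl :
  \sum_(d <- blues) (1 - grid_config m.+1 0 d) = red_total R m.+1 m.+1.
Proof.
rewrite big_map big_enum /= sumrB sumr_const card_ord -(red_blue_total R m.+1 m.+1).
suff -> : \sum_(b in 'I_m.+1) grid_config m.+1 0 (inr b) = \sum_(b < m.+1) level R m.+1 b.+1.
  by rewrite addrK.
by apply: eq_bigr => b _; rewrite /= ltn_ord.
Qed.

End Grid.

Section Strategy.
Variables (R : realType) (m k : nat).
Hypothesis size_k : (2 ^ k <= m.+1 <= 2 ^ k.+1)%N.

Definition tank_strategy :=
  grid m m.+1 ++ cover_average k (reds m) ++ cover_average k (blues m).

Lemma tank_strategy_valid : is_strategy tank_strategy.
Proof.
apply/strategy_cat/strategy_cat; first exact: grid_strategy.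
  exact: cover_average_strategy (reds_uniq m).
exact: cover_average_strategy (blues_uniq m).
Qed.

Lemma run_grid_init :
  run (grid m m.+1) (@red_blue_init R m.+1) =1 grid_config R m.+1 0.
Proof. by move=> c; rewrite (eq_run _ (fsym (@grid_config_init R m))) run_grid. Qed.

Lemma run_tank_strategy_red (a : 'I_m.+1) :
  run tank_strategy (@red_blue_init R m.+1) (inl a) <= red_total R m.+1 m.+1 / (2 ^ k)%:R.
Proof.
have le_k : (2 ^ k <= m.+1)%N by case/andP: size_k.
rewrite run_cat (run_cat (cover_average k (reds m))).
rewrite run_cover_average_out ?blues_uniq ?size_blues ?inl_notin_blues //.
rewrite (eq_run _ run_grid_init) -sum_reds_grid.
apply: run_cover_average_le; rewrite ?reds_uniq ?size_reds ?inl_in_reds //.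
by move=> _ /mapP [a' _ ->]; case/andP: (level_in01 R a'.+1 m.+1).
Qed.

Lemma run_tank_strategy_blue (b : 'I_m.+1) :
  1 - red_total R m.+1 m.+1 / (2 ^ k)%:R <= run tank_strategy (@red_blue_init R m.+1) (inr b).
Proof.
have le_k : (2 ^ k <= m.+1)%N by case/andP: size_k.
rewrite run_cat (run_cat (cover_average k (reds m))).
set y := run (cover_average k (reds m)) _.
have y_blues : {in blues m, y =1 grid_config R m.+1 0}.
  move=> _ /mapP [b' _ ->].
  by rewrite /y run_cover_average_out ?reds_uniq ?size_reds ?inr_notin_reds ?run_grid_init.
rewrite -[run _ y _](subKr 1) -run_compl lerD2l lerN2 -sum_blues_grid_compl.
rewrite (eq_big_seq (fun d => 1 - y d)) => [|d /y_blues ->] //.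
apply: run_cover_average_le; rewrite ?blues_uniq ?size_blues ?inr_in_blues //.
move=> _ /mapP [b' _ ->]; rewrite y_blues ?inr_in_blues // subr_ge0 /= ltn_ord.
by case/andP: (level_in01 R m.+1 b'.+1).
Qed.

End Strategy.

Theorem theorem1p1 (R : realType) (n : nat) (hn : (1 <= n)%N) :
  exists s : seq (('I_n + 'I_n) * ('I_n + 'I_n)),
    is_strategy s /\
    (forall i : 'I_n, run s (@red_blue_init R n) (inl i) < 2 / Num.sqrt (n%:R)) /\
    (forall i : 'I_n, run s (@red_blue_init R n) (inr i) > 1 - 2 / Num.sqrt (n%:R)).
Proof.
case: n hn => [//|m] _; set k := trunc_log 2 m.+1.
have /andP [le_k lt_k] : (2 ^ k <= m.+1 < 2 ^ k.+1)%N by apply: trunc_log_bounds.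
have size_k : (2 ^ k <= m.+1 <= 2 ^ k.+1)%N by rewrite le_k ltnW.
have total_lt : red_total R m.+1 m.+1 / (2 ^ k)%:R < 2 / Num.sqrt m.+1%:R.
  by apply: red_total_diag_lt; rewrite // addnn -mul2n -expnS.
exists (tank_strategy m k); split; first exact: tank_strategy_valid.
split=> i; first exact: le_lt_trans (run_tank_strategy_red R size_k i) total_lt.
by apply: lt_le_trans (run_tank_strategy_blue R size_k i); rewrite ltrD2l ltrN2.
Qed.
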